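(* Let $f,g$ be polynomials in $L,M$ and $\hat f,\hat g$ polynomials in $\hat L,\hat M$. Then $$\{f\hat f,g\hat g\}=[f,g]\hat f\hat g-fg[\hat f,\hat g],\qquad \{\hat f f,\hat g g\}=\hat f\hat g[f,g]-[\hat f,\hat g]fg,$$ $$\{f\hat f,\hat g g\}=[f,\hat g][g,\hat f]-f[\hat f,\hat g]g+\hat g[f,g]\hat f.$$
   Context: Setting: the two-component BKP hierarchy. $D=d/dx$; pseudo-differential operators multiply via $D^i f=\sum_{r\ge0}\binom{i}{r}D^r(f)D^{i-r}$; $A_+$ and $A_-$ denote the parts of $A=\sum f_iD^i$ with $i\ge0$ and $i<0$. Dressing operators $\Phi=1+\sum_{i\ge1}a_iD^{-i}$, $\hat\Phi=1+\sum_{i\ge1}b_iD^i$ (with $\Phi^*=D\Phi^{-1}D^{-1}$, $\hat\Phi^*=D\hat\Phi^{-1}D^{-1}$, where $(\sum f_iD^i)^*=\sum(-D)^if_i$); Lax operators $L=\Phi D\Phi^{-1}$, $\hat L=\hat\Phi D^{-1}\hat\Phi^{-1}$; Orlov–Schulman operators $M=\Phi\Gamma\Phi^{-1}$, $\hat M=\hat\Phi\hat\Gamma\hat\Phi^{-1}$ with $\Gamma=\sum_{k\ \mathrm{odd}}kt_kD^{k-1}$, $\hat\Gamma=x+\sum_{k\ \mathrm{odd}}k\hat t_kD^{-k-1}$ ($t_1=x$). For an operator $A=A(L,\hat L^{-1},M,\hat M)$, $Y_A$ denotes the derivation defined by $Y_A\Phi=-A_-\Phi$, $Y_A\hat\Phi=A_+\hat\Phi$,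 so that $Y_AL=[-A_-,L]$, $Y_AM=[-A_-,M]$, $Y_A\hat L=[A_+,\hat L]$, $Y_A\hat M=[A_+,\hat M]$, extended to products of $L,\hat L,M,\hat M$ by the Leibniz rule. The bracket is $\{A,B\}=-Y_AB+Y_BA-[A_-,B_-]+[A_+,B_+]$. *)

From HB Require Import structures.
From mathcomp Require Import all_boot all_order all_algebra.
Set Implicit Arguments. Unset Strict Implicit. Unset Printing Implicit Defensive.
Import GRing.Theory.
Local Open Scope ring_scope.

Inductive pexpr (K : Type) : Type :=
| PL | PM | PLh | PMh
| PC of K
| PAdd of pexpr K & pexpr K
| PMul of pexpr K & pexpr K.
Arguments PL {K}. Arguments PM {K}. Arguments PLh {K}. Arguments PMh {K}.

Fixpoint is_polyLM {K} (e : pexpr K) : bool :=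
  match e with
  | PL | PM | PC _ => true
  | PLh | PMh => false
  | PAdd a b | PMul a b => is_polyLM a && is_polyLM b
  end.

Fixpoint is_polyLMh {K} (e : pexpr K) : bool :=
  match e with
  | PLh | PMh | PC _ => true
  | PL | PM => false
  | PAdd a b | PMul a b => is_polyLMh a && is_polyLMh b
  end.

Section Ops.
Variables (K : comNzRingType) (R : algType K).
(* the operator algebra, the projections A |-> A_+ and A |-> A_-,
   and the operators L, M, \hat L, \hat M *)
Variables (pplus pminus : R -> R) (L M Lh Mh : R).

Definition comm (x y : R) : R := x * y - y * x.

Fixpoint peval (e : pexpr K) : R :=
  match e with
  | PL => L | PM => M | PLh => Lh | PMh => Mh
  | PC c => c%:A
  | PAdd a b => peval a + peval b
  | PMul a b => peval a * peval b
  end.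

Fixpoint Yder (A : R) (e : pexpr K) : R :=
  match e with
  | PL => comm (- pminus A) L
  | PM => comm (- pminus A) M
  | PLh => comm (pplus A) Lh
  | PMh => comm (pplus A) Mh
  | PC _ => 0
  | PAdd a b => Yder A a + Yder A b
  | PMul a b => Yder A a * peval b + peval a * Yder A b
  end.

Definition pbracket (a b : pexpr K) : R :=
  let A := peval a in let B := peval b in
  - Yder A b + Yder B a - comm (pminus A) (pminus B)
  + comm (pplus A) (pplus B).

End Ops.

(* The A_- parts cancel from the bracket: writing A_+ = A - A_-, one has
   Y_A e = -[A_-, e] + D_A e, where D_A is the derivation acting as ad A on
   \hat L, \hat M and killing L, M; hence {A, B} = [A, B] + D_B A - D_A B for
   arbitrary A, B. On a product f \hat f the derivation D_B hits only \hat f,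
   and the three formulas become identities in a noncommutative ring. *)

From HB Require Import structures.
From mathcomp Require Import all_boot all_order all_algebra.
Set Implicit Arguments. Unset Strict Implicit. Unset Printing Implicit Defensive.
Import GRing.Theory.
Local Open Scope ring_scope.

Section Commutator.
Variables (K : comNzRingType) (R : algType K).
Implicit Types x y z : R.

Lemma comm0l y : comm 0 y = 0.
Proof. by rewrite /comm mul0r mulr0 subrr. Qed.

Lemma commDl x y z : comm (x + y) z = comm x z + comm y z.
Proof. by rewrite /comm mulrDl mulrDr opprD addrACA. Qed.

Lemma commDr x y z : comm x (y + z) = comm x y + comm x z.
Proof. by rewrite /comm mulrDl mulrDr opprD addrACA. Qed.

Lemma commMr x y z : comm x (y * z) = comm x y * z + y * comm x z.
Proof. by rewrite /comm mulrBl mulrBr !mulrA addrA subrK. Qed.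

Lemma comm_scalar_r x (c : K) : comm x c%:A = 0.
Proof. by rewrite /comm mulr_algr mulr_algl subrr. Qed.

End Commutator.

(* Expands [LHS - RHS] into a sum of monomials and deletes pairs [t], [- t];
   no commutativity is used, so this proves identities of noncommutative
   rings whose expanded monomials cancel pairwise. *)
Ltac cancel_monomials :=
  apply/eqP; rewrite -subr_eq0; apply/eqP;
  rewrite ?(mulrDl, mulrDr, mulrBl, mulrBr, mulNr, mulrN,
            opprD, opprK, opprB, mulrA, addrA);
  rewrite -[LHS]addr0 -?addrA;
  repeat match goal with
  | |- context [ - ?t ] =>
      repeat progress rewrite ?(addrCA _ (- t));
      repeat progress rewrite ?(addrCA _ t);
      rewrite addNKr
  end.

Section ProductIdentities.
Variables (K : comNzRingType) (R : algType K) (f g fh gh : R).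

Lemma comm_prod_prod :
  comm (f * fh) (g * gh) + f * comm (g * gh) fh - g * comm (f * fh) gh
  = comm f g * fh * gh - f * g * comm fh gh.
Proof. by rewrite /comm; cancel_monomials. Qed.

Lemma comm_rprod_rprod :
  comm (fh * f) (gh * g) + comm (gh * g) fh * f - comm (fh * f) gh * g
  = fh * gh * comm f g - comm fh gh * f * g.
Proof. by rewrite /comm; cancel_monomials. Qed.

Lemma comm_prod_rprod :
  comm (f * fh) (gh * g) + f * comm (gh * g) fh - comm (f * fh) gh * g
  = comm f gh * comm g fh - f * comm fh gh * g + gh * comm f g * fh.
Proof. by rewrite /comm; cancel_monomials. Qed.

End ProductIdentities.

Section SplittingFreeBracket.
Variables (K : comNzRingType) (R : algType K) (L M Lh Mh : R).
Local Notation ev := (peval L M Lh Mh).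

Definition hatYder (A : R) : pexpr K -> R := Yder id (fun=> 0) L M Lh Mh A.

Lemma hatYder_polyLM A e : is_polyLM e -> hatYder A e = 0.
Proof.
rewrite /hatYder; elim: e => [||||c|a IHa b IHb /andP[ha hb]|a IHa b IHb /andP[ha hb]] //=;
  rewrite ?oppr0 ?comm0l //.
- by rewrite IHa // IHb // addr0.
- by rewrite IHa // IHb // mul0r mulr0 addr0.
Qed.

Lemma hatYder_polyLMh A e : is_polyLMh e -> hatYder A e = comm A (ev e).
Proof.
rewrite /hatYder; elim: e => [||||c|a IHa b IHb /andP[ha hb]|a IHa b IHb /andP[ha hb]] //=.
- by rewrite comm_scalar_r.
- by rewrite IHa // IHb // commDr.
- by rewrite IHa // IHb // commMr.
Qed.

Variables (pplus pminus : R -> R).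
Hypothesis split_pm : forall x, pplus x + pminus x = x.

Lemma pplusE x : pplus x = x - pminus x.
Proof. by apply/eqP; rewrite eq_sym subr_eq split_pm. Qed.

Lemma Yder_split A e :
  Yder pplus pminus L M Lh Mh A e = comm (- pminus A) (ev e) + hatYder A e.
Proof.
rewrite /hatYder; elim: e => [||||c|a IHa b IHb|a IHa b IHb] /=.
- by rewrite oppr0 comm0l addr0.
- by rewrite oppr0 comm0l addr0.
- by rewrite pplusE commDl addrC.
- by rewrite pplusE commDl addrC.
- by rewrite comm_scalar_r addr0.
- by rewrite IHa IHb commDr addrACA.
- by rewrite IHa IHb mulrDl mulrDr commMr addrACA.
Qed.

Lemma pbracket_split_free a b :
  pbracket pplus pminus L M Lh Mh a b
  = comm (ev a) (ev b) + hatYder (ev b) a - hatYder (ev a) b.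
Proof.
rewrite /pbracket !Yder_split !pplusE.
set A := ev a; set B := ev b; set Am := pminus A; set Bm := pminus B.
by rewrite /comm; cancel_monomials.
Qed.

End SplittingFreeBracket.

Theorem lemma3p3 (K : comNzRingType) (R : algType K)
  (pplus pminus : R -> R) (L M Lh Mh : R)
  (pplus_add : forall x y, pplus (x + y) = pplus x + pplus y)
  (pminus_add : forall x y, pminus (x + y) = pminus x + pminus y)
  (split_pm : forall x, pplus x + pminus x = x)
  (f g fh gh : pexpr K)
  (hf : is_polyLM f) (hg : is_polyLM g)
  (hfh : is_polyLMh fh) (hgh : is_polyLMh gh) :
  let ev := peval L M Lh Mh in
  let br := pbracket pplus pminus L M Lh Mh in
  let c := @comm K R in
  [/\ br (PMul f fh) (PMul g gh)
        = c (ev f) (ev g) * ev fh * ev gh - ev f * ev g * c (ev fh) (ev gh),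
      br (PMul fh f) (PMul gh g)
        = ev fh * ev gh * c (ev f) (ev g) - c (ev fh) (ev gh) * ev f * ev g
    & br (PMul f fh) (PMul gh g)
        = c (ev f) (ev gh) * c (ev g) (ev fh) - ev f * c (ev fh) (ev gh) * ev g
          + ev gh * c (ev f) (ev g) * ev fh].
Proof.
move=> ev br c; rewrite /br !(pbracket_split_free _ _ _ _ split_pm) /=.
rewrite !(hatYder_polyLM _ _ _ _ _ hf, hatYder_polyLM _ _ _ _ _ hg,
          hatYder_polyLMh _ _ _ _ _ hfh, hatYder_polyLMh _ _ _ _ _ hgh).
rewrite !(mul0r, mulr0, addr0, add0r).
split.
- exact: comm_prod_prod.
- exact: comm_rprod_rprod.
- exact: comm_prod_rprod.
Qed.
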